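(* Let $K=\mathbb{Q}(\sqrt{-d})$ with $d\in\{2,7,11,19,43,67,163\}$ (i.e. $K$ is an imaginary quadratic field of class number $1$ with $d\neq 1,3$). Let $L=\mathcal{O}_K=\mathbb{Z}+\mathbb{Z}\theta_d\subset\mathbb{C}\cong\mathbb{R}^2$ be the lattice of algebraic integers of $K$, where $\theta_d=\sqrt{-d}$ if $-d\equiv 2,3\pmod 4$ and $\theta_d=\frac{1+\sqrt{-d}}{2}$ if $-d\equiv 1\pmod 4$. Then for every $m>0$ such that the shell $L_m=\{x\in L: |x|^2=m\}$ is nonempty, $L_m$ is not a spherical $2$-design.
   Context: A finite nonempty set $X\subset S^{n-1}$ is a spherical $t$-design if $\frac{1}{|X|}\sum_{x\in X}f(x)=\frac{1}{|S^{n-1}|}\int_{S^{n-1}}f\,d\sigma$ for all polynomials $f$ of degree at most $t$; a finite nonempty subset $X$ of the sphere of radius $r$ is a spherical $t$-design if $\frac{1}{r}X$ is one. (For $n=2$, a finite set $\{\xi_1,\dots,\xi_N\}$ on the unit circle in $\mathbb{C}$ is a spherical $t$-design iff $\sum_i\xi_i^k=0$ for $k=1,\dots,t$.) *)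

From Stdlib Require Import Reals List ZArith.
From Coquelicot Require Import Coquelicot.
Open Scope R_scope.

(* Points of R^2 = C are pairs (real part, imaginary part). *)

Definition poly2_eval (t : nat) (c : nat -> nat -> R) (x y : R) : R :=
  sum_f_R0 (fun i => sum_f_R0 (fun j => c i j * x ^ i * y ^ j) (t - i)) t.

Definition sphere_avg (f : R * R -> R) : R :=
  RInt (fun th => f (cos th, sin th)) 0 (2 * PI) / (2 * PI).

Definition sum_list (l : list R) : R := fold_right Rplus 0 l.

Definition spherical_design (t : nat) (X : list (R * R)) : Prop :=
  X <> nil /\ NoDup X /\
  (forall p, In p X -> fst p ^ 2 + snd p ^ 2 = 1) /\
  forall c : nat -> nat -> R,
    sum_list (map (fun p => poly2_eval t c (fst p) (snd p)) X) / INR (length X)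
    = sphere_avg (fun p => poly2_eval t c (fst p) (snd p)).

Definition spherical_design_r (t : nat) (r : R) (X : list (R * R)) : Prop :=
  r > 0 /\ spherical_design t (map (fun p => (fst p / r, snd p / r)) X).

Definition theta (d : Z) : R * R :=
  if Z.eqb (Z.modulo (- d) 4) 1
  then (1 / 2, sqrt (IZR d) / 2)
  else (0, sqrt (IZR d)).

Definition lat_pt (d : Z) (ab : Z * Z) : R * R :=
  (IZR (fst ab) + IZR (snd ab) * fst (theta d), IZR (snd ab) * snd (theta d)).

Definition in_lattice (d : Z) (x : R * R) : Prop := exists ab : Z * Z, x = lat_pt d ab.

From Stdlib Require Import Reals List ZArith.
From Coquelicot Require Import Coquelicot.
From Stdlib Require Import Znumtheory Zwf Permutation Lia Lra Bool.
Open Scope R_scope.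

(** Since [x^2 - y^2] has mean zero on the circle, a shell that is a spherical 2-design
    satisfies [sum_{g in L_m} Re (g^2) = 0].  As [O_K] has class number one and units [±1],
    [F m = sum_{nrm g = m} tr (g^2)] behaves like the coefficients of a Hecke eigenform:
    [F (l m) = - l F m] at the ramified prime [l = - r^2]; [F (q^2 m) = q^2 F m] at an inert
    prime [q], and [L_m] is empty when [q] divides [m] but [q^2] does not; and along the powers
    of a split prime [p = pi * cnj pi] the values follow [c (j+2) = tr (pi^2) c (j+1) - p^2 c j].
    Modulo [p] this gives [c j = tr (pi^2) ^ j], and [p] does not divide [tr (pi^2)], so
    [F m <> 0] on every nonempty shell.  Class number one enters through reduction of binary
    quadratic forms: every reduced form of discriminant [-disc] is principal, so a prime
    dividing a primitive norm is itself a norm. *)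

Section ListSums.
Local Open Scope Z_scope.
Context {A : Type}.

Definition zsum (f : A -> Z) (l : list A) : Z := fold_right (fun x acc => f x + acc) 0 l.

Lemma zsum_perm f l l' : Permutation l l' -> zsum f l = zsum f l'.
Proof. induction 1; simpl; lia. Qed.

Lemma zsum_ext f g l : (forall x, In x l -> f x = g x) -> zsum f l = zsum g l.
Proof. induction l as [|x l IH]; simpl; intros H; auto. rewrite H, IH; auto. Qed.

Lemma zsum_add f g l : zsum (fun x => f x + g x) l = zsum f l + zsum g l.
Proof. induction l; simpl; lia. Qed.

Lemma zsum_scal c f l : zsum (fun x => c * f x) l = c * zsum f l.
Proof. induction l; simpl; lia. Qed.

Lemma zsum_one l : zsum (fun _ => 1) l = Z.of_nat (length l).
Proof. induction l; unfold zsum in *; cbn [fold_right length]; lia. Qed.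

Lemma zsum_filter_true f P l : (forall x, In x l -> P x = true) -> zsum f (filter P l) = zsum f l.
Proof.
  induction l as [|x l IH]; simpl; intros H; auto. rewrite H; simpl; auto. rewrite IH; auto.
Qed.

Lemma zsum_filter_false f P l : (forall x, In x l -> P x = false) -> zsum f (filter P l) = 0.
Proof. induction l as [|x l IH]; simpl; intros H; auto. rewrite H; simpl; auto. Qed.

Lemma zsum_filter_orb f P1 P2 l : (forall x, In x l -> P1 x || P2 x = true) ->
  zsum f l = zsum f (filter P1 l) + zsum f (filter P2 l)
             - zsum f (filter (fun x => P1 x && P2 x) l).
Proof.
  induction l as [|x l IH]; simpl; intros H; auto.
  rewrite IH by auto. specialize (H x (or_introl eq_refl)).
  destruct (P1 x), (P2 x); simpl in *; try discriminate; simpl; lia.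
Qed.

End ListSums.

Lemma zsum_map {A B} (f : B -> Z) (g : A -> B) l : zsum f (map g l) = zsum (fun x => f (g x)) l.
Proof. induction l; simpl; lia. Qed.

Lemma NoDup_list_prod {A B} (l : list A) (l' : list B) :
  NoDup l -> NoDup l' -> NoDup (list_prod l l').
Proof.
  induction 1 as [|x l Hx Hl IH]; intros Hl'; simpl; [constructor|].
  apply NoDup_app; auto.
  - apply FinFun.Injective_map_NoDup; auto. intros a b H; now inversion H.
  - intros [a b] H1 H2. apply in_map_iff in H1 as [y [Hy _]]. inversion Hy; subst.
    apply in_prod_iff in H2 as [H2 _]. contradiction.
Qed.

Section IntegerFacts.
Local Open Scope Z_scope.

Definition zseg (a b : Z) : list Z := map (fun i => a + Z.of_nat i) (seq 0 (Z.to_nat (b - a + 1))).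

Lemma in_zseg a b z : In z (zseg a b) <-> a <= z <= b.
Proof.
  unfold zseg; rewrite in_map_iff; split.
  - intros [i [<- Hi]]. apply in_seq in Hi. lia.
  - intros H. exists (Z.to_nat (z - a)). split; [lia|]. apply in_seq; lia.
Qed.

Lemma zseg_NoDup a b : NoDup (zseg a b).
Proof. apply FinFun.Injective_map_NoDup; [intros i j; lia | apply seq_NoDup]. Qed.

Lemma prime_divisor_exists m : 1 < m -> exists q, prime q /\ (q | m).
Proof.
  intros Hm. induction m as [m IH] using (well_founded_induction (Zwf_well_founded 0)).
  destruct (prime_dec m) as [P|P]; [exists m; split; auto; exists 1; ring|].
  destruct (not_prime_divide m Hm P) as [d [Hd Hdm]].
  destruct (IH d ltac:(unfold Zwf; lia) ltac:(lia)) as [q [Hq Hqd]].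
  exists q; split; auto. eapply Z.divide_trans; eauto.
Qed.

Lemma pow_factor_out q m : 1 < q -> 0 < m ->
  exists j m', m = q ^ Z.of_nat j * m' /\ ~ (q | m') /\ 0 < m'.
Proof.
  intros Hq Hm. induction m as [m IH] using (well_founded_induction (Zwf_well_founded 0)).
  destruct (Zdivide_dec q m) as [[m2 E]|N].
  - assert (0 < m2) by nia.
    destruct (IH m2 ltac:(unfold Zwf; nia) H) as [j [m' [E2 [N2 P2]]]].
    exists (S j), m'. rewrite Nat2Z.inj_succ, Z.pow_succ_r by lia.
    split; [rewrite E, E2; ring | auto].
  - exists O, m. change (Z.of_nat 0) with 0. rewrite Z.pow_0_r. split; [ring | auto].
Qed.

Lemma prime_divide_pow q s j : prime q -> (q | s ^ Z.of_nat j) -> j <> O -> (q | s).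
Proof.
  intros Hq. induction j as [|[|j] IH]; intros H Hj; [congruence| |].
  - change (Z.of_nat 1) with 1 in H. rewrite Z.pow_1_r in H. exact H.
  - rewrite Nat2Z.inj_succ, Z.pow_succ_r in H by lia.
    destruct (prime_mult q Hq _ _ H); auto.
Qed.

Lemma eq0_iff_scale a b x y x' y' : a <> 0 -> b <> 0 -> x = a * x' -> y = b * y' ->
  (x' = 0 <-> y' = 0) -> (x = 0 <-> y = 0).
Proof. intros Ha Hb -> -> H. rewrite !Z.mul_eq_0. tauto. Qed.

Fixpoint lrec (s t : Z) (j : nat) : Z :=
  match j with
  | O => 1
  | S O => s
  | S (S i as i') => s * lrec s t i' - t * lrec s t i
  end.

Lemma lrec_solution s t (u : nat -> Z) : u 1%nat = s * u 0%nat ->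
  (forall j, u (S (S j)) = s * u (S j) - t * u j) ->
  forall j, u j = lrec s t j * u 0%nat.
Proof.
  intros H1 H2.
  enough (H : forall j, u j = lrec s t j * u 0%nat /\ u (S j) = lrec s t (S j) * u 0%nat)
    by (intros j; apply H).
  induction j as [|j [IH1 IH2]].
  - cbn [lrec]. split; lia.
  - split; auto. rewrite H2, IH1, IH2.
    change (lrec s t (S (S j))) with (s * lrec s t (S j) - t * lrec s t j). ring.
Qed.

Lemma lrec_mod s q j : (q | lrec s (q * q) j - s ^ Z.of_nat j).
Proof.
  enough (H : (q | lrec s (q * q) j - s ^ Z.of_nat j) /\
              (q | lrec s (q * q) (S j) - s ^ Z.of_nat (S j))) by apply H.
  induction j as [|j [_ [b Hb]]].
  - split; [exists 0 | exists 0]; simpl; lia.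
  - split; [exists b; exact Hb|].
    rewrite (Nat2Z.inj_succ (S j)), Z.pow_succ_r by lia.
    exists (s * b - q * lrec s (q * q) j). change (lrec s (q * q) (S (S j)))
      with (s * lrec s (q * q) (S j) - q * q * lrec s (q * q) j). nia.
Qed.

Lemma lrec_neq0 s q j : prime q -> ~ (q | s) -> lrec s (q * q) j <> 0.
Proof.
  intros Hq Hs E. destruct j as [|j]; [discriminate|].
  destruct (lrec_mod s q (S j)) as [a Ha]. rewrite E in Ha.
  apply Hs, (prime_divide_pow q s (S j)); auto. exists (- a). lia.
Qed.

Lemma lrec_2_1 j : lrec 2 1 j = Z.of_nat (S j).
Proof.
  symmetry. transitivity (lrec 2 1 j * Z.of_nat 1); [| lia].
  apply (lrec_solution 2 1 (fun j => Z.of_nat (S j))); intros; cbv beta; lia.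
Qed.

Definition prime_b (p : Z) : bool :=
  (1 <? p) && forallb (fun i => Z.gcd i p =? 1) (zseg 1 (p - 1)).

Lemma prime_bP p : prime_b p = true -> prime p.
Proof.
  unfold prime_b. rewrite andb_true_iff, Z.ltb_lt, forallb_forall. intros [H1 Hc].
  apply prime_intro; auto. intros n Hn. apply Zgcd_1_rel_prime, Z.eqb_eq, Hc, in_zseg. lia.
Qed.

Lemma even_dvd2 x : Z.even x = true -> (2 | x).
Proof. intros E. apply Z.even_spec in E as [y ->]. exists y. ring. Qed.

End IntegerFacts.

(* The ring [Z[w]] with [w^2 = e1 w - k]; the pair [(a, b)] stands for [a + b w]. *)
Section QuadraticRing.
Local Open Scope Z_scope.
Variables e1 k : Z.
Hypothesis He1 : e1 = 0 \/ e1 = 1.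
Hypothesis Hk : 2 <= k.

Definition nrm (x : Z * Z) : Z := fst x * fst x + e1 * fst x * snd x + k * snd x * snd x.
Definition tr (x : Z * Z) : Z := 2 * fst x + e1 * snd x.
Definition mul (x y : Z * Z) : Z * Z :=
  (fst x * fst y - k * snd x * snd y, fst x * snd y + snd x * fst y + e1 * snd x * snd y).
Definition cnj (x : Z * Z) : Z * Z := (fst x + e1 * snd x, - snd x).
Definition disc : Z := 4 * k - e1 * e1.
Definition trsq (x : Z * Z) : Z := tr (mul x x).

Lemma disc_ge7 : 7 <= disc.
Proof. unfold disc; destruct He1 as [-> | ->]; lia. Qed.

Lemma nrm4 x : 4 * nrm x = tr x * tr x + disc * snd x * snd x.
Proof. unfold nrm, tr, disc; ring. Qed.

Lemma nrm_nonneg x : 0 <= nrm x.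
Proof. pose proof (nrm4 x). pose proof disc_ge7. nia. Qed.

Lemma nrm_eq1 x : nrm x = 1 -> x = (1, 0) \/ x = (-1, 0).
Proof.
  intros H. pose proof (nrm4 x) as H4. pose proof disc_ge7. destruct x as [a b].
  unfold tr in H4; cbn [fst snd] in *. rewrite H in H4.
  pose proof (Z.square_nonneg (2 * a + e1 * b)). assert (b = 0) by nia. subst b.
  unfold nrm in H; cbn [fst snd] in H.
  assert (a = 1 \/ a = -1) as [-> | ->] by nia; auto.
Qed.

Lemma mulC x y : mul x y = mul y x.
Proof. unfold mul; f_equal; ring. Qed.

Lemma mulA x y z : mul x (mul y z) = mul (mul x y) z.
Proof. unfold mul; cbn [fst snd]; f_equal; ring. Qed.

Lemma nrm_mul x y : nrm (mul x y) = nrm x * nrm y.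
Proof. unfold nrm, mul; cbn [fst snd]; ring. Qed.

Lemma mul_cnj x : mul x (cnj x) = (nrm x, 0).
Proof. unfold nrm, mul, cnj; cbn [fst snd]; f_equal; ring. Qed.

Lemma nrm_cnj x : nrm (cnj x) = nrm x.
Proof. unfold nrm, cnj; cbn [fst snd]; ring. Qed.

Lemma cnjK x : cnj (cnj x) = x.
Proof. destruct x; unfold cnj; cbn [fst snd]; f_equal; ring. Qed.

Lemma mul_scal c x : mul (c, 0) x = (c * fst x, c * snd x).
Proof. unfold mul; cbn [fst snd]; f_equal; ring. Qed.

Lemma nrm_scal c : nrm (c, 0) = c * c.
Proof. unfold nrm; cbn [fst snd]; ring. Qed.

Lemma scal_dvd_nrm q g : (q | fst g) -> (q | snd g) -> (q * q | nrm g).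
Proof.
  intros [x Hx] [y Hy]. exists (nrm (x, y)).
  destruct g; cbn [fst snd] in *; subst; unfold nrm; cbn [fst snd]; ring.
Qed.

Lemma trsq_eq x : trsq x = tr x * tr x - 2 * nrm x.
Proof. unfold trsq, tr, mul, nrm; cbn [fst snd]; ring. Qed.

Lemma trsq_mul_add_cnj p x : trsq (mul p x) + trsq (mul (cnj p) x) = trsq p * trsq x.
Proof. unfold trsq, tr, mul, cnj; cbn [fst snd]; ring. Qed.

Lemma trsq_mul_scal c x : trsq (mul (c, 0) x) = c * c * trsq x.
Proof. unfold trsq, tr, mul; cbn [fst snd]; ring. Qed.

Lemma trsq_mul_sqrt c r x : mul r r = (c, 0) -> trsq (mul r x) = c * trsq x.
Proof.
  intros Hr. unfold trsq.
  rewrite (mulA (mul r x)), <- (mulA r x r), (mulC x r), mulA, Hr, <- mulA, mul_scal.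
  unfold tr; cbn [fst snd]; ring.
Qed.

Lemma mul_inj p x y : nrm p <> 0 -> mul p x = mul p y -> x = y.
Proof.
  intros Hn H.
  assert (E : mul (nrm p, 0) x = mul (nrm p, 0) y)
    by now rewrite <- mul_cnj, (mulC p), <- !mulA, H.
  rewrite !mul_scal in E. injection E; intros.
  destruct x, y; cbn [fst snd] in *; f_equal; nia.
Qed.

Definition divb (p g : Z * Z) : bool :=
  let y := mul g (cnj p) in (fst y mod nrm p =? 0) && (snd y mod nrm p =? 0).

Lemma divb_coord p g : nrm p <> 0 ->
  divb p g = true <-> (nrm p | fst (mul g (cnj p))) /\ (nrm p | snd (mul g (cnj p))).
Proof. intros Hp. unfold divb. rewrite andb_true_iff, !Z.eqb_eq, !Z.mod_divide by lia. tauto. Qed.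

Lemma divbP p g : nrm p <> 0 -> divb p g = true <-> exists a, g = mul p a.
Proof.
  intros Hn. rewrite divb_coord by auto. split.
  - intros [[q1 H1] [q2 H2]]. exists (q1, q2). apply (mul_inj (cnj p)); [rewrite nrm_cnj; auto|].
    rewrite mulA, (mulC (cnj p) p), mul_cnj, mul_scal, mulC.
    destruct (mul g (cnj p)); cbn [fst snd] in *; f_equal; lia.
  - intros [a ->]. rewrite (mulC p a), <- mulA, mul_cnj, mulC, mul_scal; cbn [fst snd].
    split; [exists (fst a) | exists (snd a)]; ring.
Qed.

Lemma divb_scalP q g : q <> 0 -> divb (q, 0) g = true <-> (q | fst g) /\ (q | snd g).
Proof.
  intros Hq. rewrite divbP by (rewrite nrm_scal; nia). split.
  - intros [a ->]. rewrite mul_scal; cbn [fst snd].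
    split; [exists (fst a) | exists (snd a)]; ring.
  - intros [[x Hx] [y Hy]]. exists (x, y). rewrite mul_scal.
    destruct g; cbn [fst snd] in *; f_equal; lia.
Qed.

Definition shell (m : Z) : list (Z * Z) :=
  let box := zseg (-4 * m) (4 * m) in filter (fun x => nrm x =? m) (list_prod box box).

Lemma shell_NoDup m : NoDup (shell m).
Proof. apply NoDup_filter, NoDup_list_prod; apply zseg_NoDup. Qed.

Lemma in_shell m x : In x (shell m) <-> nrm x = m.
Proof.
  unfold shell; rewrite filter_In, Z.eqb_eq; split; [tauto|]. intros H; split; auto.
  destruct x as [a b]. apply in_prod_iff. rewrite !in_zseg.
  pose proof (nrm4 (a, b)) as H4. pose proof disc_ge7. unfold tr in H4; cbn [fst snd] in H4.
  rewrite H in H4. set (T := 2 * a + e1 * b) in *.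
  pose proof (Z.square_nonneg T). pose proof (Z.square_nonneg b).
  assert (b * b <= m /\ T * T <= 4 * m) by nia.
  assert (-b <= b * b /\ b <= b * b /\ -T <= T * T /\ T <= T * T) by nia.
  assert (2 * a = T - e1 * b) by (unfold T; ring).
  destruct He1 as [E | E]; rewrite E in *; split; nia.
Qed.

Definition shell_sum (f : Z * Z -> Z) (m : Z) : Z := zsum f (shell m).

Lemma shell_sum_one m : shell_sum (fun _ => 1) m = Z.of_nat (length (shell m)).
Proof. apply zsum_one. Qed.

Lemma shell_1_perm : Permutation (shell 1) ((1, 0) :: (-1, 0) :: nil).
Proof.
  apply NoDup_Permutation; [apply shell_NoDup | repeat constructor; simpl; intuition congruence |].
  intros x. rewrite in_shell. split.
  - intros H. destruct (nrm_eq1 x H) as [-> | ->]; simpl; auto.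
  - intros [<- | [<- | []]]; unfold nrm; cbn [fst snd]; ring.
Qed.

Lemma shell_sum_1 f : shell_sum f 1 = f (1, 0) + f (-1, 0).
Proof. unfold shell_sum. rewrite (zsum_perm _ _ _ shell_1_perm). cbn; ring. Qed.

Lemma shell_mul_perm p m : 0 < nrm p ->
  Permutation (map (mul p) (shell m)) (filter (divb p) (shell (nrm p * m))).
Proof.
  intros Hp. apply NoDup_Permutation.
  - apply FinFun.Injective_map_NoDup; [intros x y; apply mul_inj; lia | apply shell_NoDup].
  - apply NoDup_filter, shell_NoDup.
  - intros g. rewrite in_map_iff, filter_In, in_shell, divbP by lia. split.
    + intros [a [<- Ha]]. rewrite in_shell in Ha. rewrite nrm_mul, Ha. eauto.
    + intros [Hg [a ->]]. exists a. rewrite in_shell. rewrite nrm_mul in Hg. split; [auto | nia].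
Qed.

Lemma zsum_shell_divb f p m : 0 < nrm p ->
  zsum f (filter (divb p) (shell (nrm p * m))) = shell_sum (fun a => f (mul p a)) m.
Proof. intros Hp. rewrite <- (zsum_perm _ _ _ (shell_mul_perm p m Hp)), zsum_map. reflexivity. Qed.

Lemma shell_sum_divisible f r m : 0 < nrm r -> (forall g, (nrm r | nrm g) -> divb r g = true) ->
  shell_sum f (nrm r * m) = shell_sum (fun a => f (mul r a)) m.
Proof.
  intros Hr Hd. rewrite <- zsum_shell_divb by auto. symmetry. apply zsum_filter_true.
  intros x Hx. apply Hd. apply in_shell in Hx. rewrite Hx. exists m; ring.
Qed.

(* [snd (g * cnj p) * snd (g * p) = snd g ^ 2 * nrm p - snd p ^ 2 * nrm g], so the prime [nrm p]
   divides one factor; and if [nrm p] divides the norm and the second coordinate of an element,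
   it divides the first. *)
Lemma divb_orb_cnj p g : prime (nrm p) -> (nrm p | nrm g) -> divb p g || divb (cnj p) g = true.
Proof.
  intros Hpr [n Hn]. pose proof (prime_ge_2 _ Hpr) as H2.
  apply orb_true_iff. rewrite !divb_coord, nrm_cnj, cnjK by (rewrite ?nrm_cnj; lia).
  set (q := nrm p) in *.
  assert (key : forall h, nrm h = q -> (q | snd (mul g (cnj h))) -> (q | fst (mul g (cnj h)))).
  { intros h Hh [y Hy]. set (X := fst (mul g (cnj h))).
    enough (HXX : (q | X * X)) by (destruct (prime_mult q Hpr _ _ HXX); auto).
    assert (E : nrm (mul g (cnj h))
                = X * X + e1 * X * snd (mul g (cnj h)) + k * snd (mul g (cnj h)) * snd (mul g (cnj h)))
      by reflexivity.
    rewrite nrm_mul, nrm_cnj, Hh, Hn, Hy in E. exists (n * q - e1 * X * y - k * y * y * q). nia. }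
  assert (Hy : (q | snd (mul g (cnj p)) * snd (mul g p))).
  { exists (snd g * snd g - snd p * snd p * n).
    transitivity (snd g * snd g * q - snd p * snd p * nrm g); [| rewrite Hn; ring].
    unfold q; destruct g, p; unfold mul, cnj, nrm; cbn [fst snd]; ring. }
  destruct (prime_mult q Hpr _ _ Hy) as [H | H].
  - left. auto.
  - right. split; auto. rewrite <- (cnjK p). apply key; [apply nrm_cnj | now rewrite cnjK].
Qed.

Lemma divb_andb_cnj p g : prime (nrm p) -> ~ (nrm p | tr p) ->
  divb p g && divb (cnj p) g = divb (nrm p, 0) g.
Proof.
  intros Hpr Htr. pose proof (prime_ge_2 _ Hpr) as H2. set (q := nrm p) in *.
  apply eq_iff_eq_true. rewrite andb_true_iff, divb_scalP, !divbP by (rewrite ?nrm_cnj; lia).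
  split.
  - intros [[a Ha] [b Hb]].
    (* [tr p * g = g * cnj p + g * p = q * (a + b)] with [q] coprime to [tr p] *)
    assert (E : forall i, i = @fst Z Z \/ i = @snd Z Z -> tr p * i g = q * (i a + i b)).
    { assert (Ea : mul g (cnj p) = mul (q, 0) a)
        by (rewrite Ha, (mulC p a), <- mulA, mul_cnj, mulC; reflexivity).
      assert (Eb : mul g p = mul (q, 0) b)
        by (rewrite Hb, (mulC (cnj p) b), <- mulA, (mulC (cnj p) p), mul_cnj, mulC; reflexivity).
      intros i Hi. transitivity (i (mul g (cnj p)) + i (mul g p)).
      - destruct Hi as [-> | ->]; destruct g, p; unfold tr, mul, cnj; cbn [fst snd]; ring.
      - rewrite Ea, Eb, !mul_scal. destruct Hi as [-> | ->]; cbn [fst snd]; ring. }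
    split; [destruct (prime_mult q Hpr (tr p) (fst g))
           | destruct (prime_mult q Hpr (tr p) (snd g))];
      auto; try contradiction; [exists (fst a + fst b) | exists (snd a + snd b)];
      rewrite E by auto; ring.
  - intros [[x Hx] [y Hy]]. assert (Hg : g = mul (q, 0) (x, y)).
    { rewrite mul_scal. destruct g; cbn [fst snd] in *; f_equal; lia. }
    split; [exists (mul (cnj p) (x, y)) | exists (mul p (x, y))]; rewrite Hg, mulA;
      [| rewrite (mulC (cnj p) p)]; rewrite mul_cnj; reflexivity.
Qed.

Lemma shell_sum_split f lam p m : prime (nrm p) -> ~ (nrm p | tr p) ->
  (forall a, f (mul p a) + f (mul (cnj p) a) = lam * f a) ->
  shell_sum f (nrm p * m)
  = lam * shell_sum f m - zsum f (filter (divb (nrm p, 0)) (shell (nrm p * m))).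
Proof.
  intros Hpr Htr Hf. pose proof (prime_ge_2 _ Hpr).
  unfold shell_sum at 1. rewrite (zsum_filter_orb f (divb p) (divb (cnj p))).
  - rewrite (filter_ext _ _ (fun g => divb_andb_cnj p g Hpr Htr)).
    rewrite zsum_shell_divb by lia. rewrite <- (nrm_cnj p) at 1.
    rewrite zsum_shell_divb by (rewrite nrm_cnj; lia).
    unfold shell_sum. rewrite <- zsum_add, <- zsum_scal. f_equal. apply zsum_ext; auto.
  - intros x Hx. apply divb_orb_cnj; auto. apply in_shell in Hx. rewrite Hx. exists m; ring.
Qed.

Lemma shell_sum_split_pow f lam mu p m' : prime (nrm p) -> ~ (nrm p | tr p) -> ~ (nrm p | m') ->
  (forall a, f (mul p a) + f (mul (cnj p) a) = lam * f a) ->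
  (forall a, f (mul (nrm p, 0) a) = mu * f a) ->
  forall j, shell_sum f (nrm p ^ Z.of_nat j * m') = lrec lam mu j * shell_sum f m'.
Proof.
  intros Hpr Htr Hm' Hlam Hmu. pose proof (prime_ge_2 _ Hpr).
  assert (Hpow : forall j, nrm p ^ Z.of_nat (S j) = nrm p * nrm p ^ Z.of_nat j)
    by (intros j; rewrite Nat2Z.inj_succ, Z.pow_succ_r; lia).
  intros j. rewrite (lrec_solution lam mu (fun j => shell_sum f (nrm p ^ Z.of_nat j * m'))).
  - cbn [Z.of_nat]. now rewrite Z.pow_0_r, Z.mul_1_l.
  - rewrite Hpow. change (Z.of_nat 0) with 0. rewrite Z.pow_0_r, Z.mul_1_r, Z.mul_1_l.
    rewrite (shell_sum_split f lam), zsum_filter_false; auto; [ring|].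
    intros g Hg. apply in_shell in Hg. apply Bool.not_true_iff_false. rewrite divb_scalP by lia.
    intros [Hx Hy]. apply Hm'. destruct (scal_dvd_nrm _ _ Hx Hy) as [n Hn]. exists n.
    apply (Z.mul_cancel_l _ _ (nrm p)); lia.
  - clear j. intros j. rewrite !Hpow, <- !Z.mul_assoc, (shell_sum_split f lam) by auto. f_equal.
    rewrite Z.mul_assoc, <- nrm_scal, zsum_shell_divb by (rewrite nrm_scal; nia).
    unfold shell_sum. rewrite <- zsum_scal. apply zsum_ext; auto.
Qed.

Section NonVanishing.
Variables (l : Z) (r : Z * Z).
Hypothesis Hl : prime l.
Hypothesis Hr : mul r r = (- l, 0).
Hypothesis Hram : forall g, (l | nrm g) -> divb r g = true.
Hypothesis Hsplit_tr : forall p, prime (nrm p) -> nrm p <> l -> ~ (nrm p | tr p).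
Hypothesis Hnorm : forall q g, prime q -> q <> l -> (q | nrm g) ->
  ~ ((q | fst g) /\ (q | snd g)) -> exists p, nrm p = q.

(* The count is carried along only to know when a smaller shell is nonempty. *)
Definition vanishing_agree (m : Z) : Prop :=
  shell_sum trsq m = 0 <-> shell_sum (fun _ => 1) m = 0.

Lemma nrm_r : nrm r = l.
Proof.
  pose proof (prime_ge_2 _ Hl). pose proof (nrm_nonneg r).
  assert (nrm r * nrm r = l * l) by (rewrite <- nrm_mul, Hr, nrm_scal; ring). nia.
Qed.

Lemma vanishing_agree_1 : vanishing_agree 1.
Proof. unfold vanishing_agree. rewrite !shell_sum_1. unfold trsq, tr, mul; cbn [fst snd]. lia. Qed.

Lemma vanishing_agree_ramified m : vanishing_agree m -> vanishing_agree (l * m).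
Proof.
  pose proof (prime_ge_2 _ Hl). unfold vanishing_agree. rewrite <- nrm_r.
  rewrite !shell_sum_divisible by (rewrite ?nrm_r; auto; lia).
  apply (eq0_iff_scale (- l) 1); try lia.
  unfold shell_sum. rewrite <- zsum_scal. apply zsum_ext. intros. apply trsq_mul_sqrt, Hr.
Qed.

Lemma vanishing_agree_split p j m' : prime (nrm p) -> nrm p <> l -> ~ (nrm p | m') ->
  vanishing_agree m' -> vanishing_agree (nrm p ^ Z.of_nat j * m').
Proof.
  intros Hp Hpl Hm'. pose proof (Hsplit_tr p Hp Hpl) as Htr. unfold vanishing_agree.
  rewrite (shell_sum_split_pow trsq (trsq p) (nrm p * nrm p))
    by auto using trsq_mul_add_cnj, trsq_mul_scal.
  rewrite (shell_sum_split_pow (fun _ => 1) 2 1) by (auto; intros; ring).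
  apply (eq0_iff_scale (lrec (trsq p) (nrm p * nrm p) j) (lrec 2 1 j)); auto;
    [| rewrite lrec_2_1; lia].
  apply lrec_neq0; auto. rewrite trsq_eq. intros Hd. apply Htr.
  assert (Hd2 : (nrm p | tr p * tr p)) by (destruct Hd as [z Hz]; exists (z + 2); lia).
  destruct (prime_mult _ Hp _ _ Hd2); auto.
Qed.

Lemma inert_dvd q g : prime q -> q <> l -> shell q = nil -> (q | nrm g) ->
  (q | fst g) /\ (q | snd g).
Proof.
  intros Hq Hql Hsh Hg. destruct (Zdivide_dec q (fst g)), (Zdivide_dec q (snd g)); auto;
    exfalso; destruct (Hnorm q g) as [p Hp]; auto; try tauto;
    assert (Hin : In p (shell q)) by (apply in_shell; auto); rewrite Hsh in Hin; exact Hin.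
Qed.

Lemma vanishing_agree_inert q m : prime q -> q <> l -> shell q = nil ->
  vanishing_agree m -> vanishing_agree (q * q * m).
Proof.
  intros Hq Hql Hsh. pose proof (prime_ge_2 _ Hq). unfold vanishing_agree.
  assert (Hdiv : forall g, (nrm (q, 0) | nrm g) -> divb (q, 0) g = true).
  { intros g Hg. rewrite nrm_scal in Hg. rewrite divb_scalP by lia. apply (inert_dvd q); auto.
    apply (Z.divide_trans _ (q * q)); auto. exists q; ring. }
  rewrite <- nrm_scal, !shell_sum_divisible by (auto; rewrite nrm_scal; nia).
  apply (eq0_iff_scale (q * q) 1); try nia.
  unfold shell_sum. rewrite <- zsum_scal. apply zsum_ext. intros. apply trsq_mul_scal.
Qed.

Lemma shell_inert_nil q m : prime q -> q <> l -> shell q = nil -> (q | m) -> ~ (q * q | m) ->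
  shell m = nil.
Proof.
  intros Hq Hql Hsh Hm Hm2. destruct (shell m) as [|g s] eqn:E; auto. exfalso.
  assert (Hg : nrm g = m) by (apply in_shell; rewrite E; left; auto).
  subst m. apply Hm2. apply scal_dvd_nrm; apply (inert_dvd q); auto.
Qed.

Theorem shell_sum_trsq_neq0 m : 1 <= m -> shell m <> nil -> shell_sum trsq m <> 0.
Proof.
  intros Hm Hne. enough (H : vanishing_agree m).
  { unfold vanishing_agree in H. rewrite H, shell_sum_one.
    destruct (shell m); [congruence | simpl length; lia]. }
  clear Hne. induction m as [m IH] using (well_founded_induction (Zwf_well_founded 1)).
  pose proof (prime_ge_2 _ Hl).
  destruct (Z.eq_dec m 1) as [-> | Hm1]; [exact vanishing_agree_1 |].
  destruct (prime_divisor_exists m ltac:(lia)) as [q [Hq [m2 Hqm]]].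
  pose proof (prime_ge_2 _ Hq).
  destruct (Z.eq_dec q l) as [-> | Hql].
  - rewrite Hqm, Z.mul_comm. apply vanishing_agree_ramified, IH; unfold Zwf; nia.
  - destruct (shell q) as [|p s] eqn:Hsh.
    + destruct (Zdivide_dec (q * q) m) as [[m3 Hm3] | Hnd].
      * assert (0 < m3) by nia.
        assert (4 <= q * q) by nia.
        rewrite Hm3, Z.mul_comm. apply vanishing_agree_inert; auto. apply IH; unfold Zwf; nia.
      * unfold vanishing_agree, shell_sum.
        rewrite (shell_inert_nil q m); auto; [reflexivity | exists m2; auto].
    + assert (Hp : nrm p = q) by (apply in_shell; rewrite Hsh; left; auto). subst q.
      destruct (pow_factor_out (nrm p) m ltac:(lia) ltac:(lia)) as [j [m' [Em [Hm' Hpos]]]].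
      destruct j as [|j].
      { exfalso. apply Hm'. rewrite <- (Z.mul_1_l m'). rewrite Em in Hqm. exists m2. exact Hqm. }
      assert (m' < m).
      { rewrite Em, Nat2Z.inj_succ, Z.pow_succ_r by lia.
        assert (0 < nrm p ^ Z.of_nat j) by (apply Z.pow_pos_nonneg; lia).
        assert (2 <= nrm p * nrm p ^ Z.of_nat j) by nia. nia. }
      rewrite Em. apply vanishing_agree_split; auto. apply IH; unfold Zwf; lia.
Qed.

End NonVanishing.

Definition only_principal_reduced (D : Z) : bool :=
  forallb (fun A => (A =? 1) || (D <? 3 * A * A) ||
    forallb (fun B => negb ((B * B + D) mod (4 * A) =? 0)) (zseg (- A) (A - 1))) (zseg 1 D).

Lemma only_principal_reducedP D : only_principal_reduced D = true ->
  forall A B C, 1 <= A -> 3 * A * A <= D -> -A <= B < A -> B * B + D = 4 * A * C -> A = 1.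
Proof.
  intros HD A B C HA HAD HB HBC. unfold only_principal_reduced in HD.
  rewrite forallb_forall in HD. specialize (HD A ltac:(apply in_zseg; nia)).
  apply orb_true_iff in HD as [HD | HD]; [apply orb_true_iff in HD as [HD | HD] |].
  { now apply Z.eqb_eq. }
  { apply Z.ltb_lt in HD. lia. }
  rewrite forallb_forall in HD. specialize (HD B ltac:(apply in_zseg; lia)).
  exfalso. apply negb_true_iff, Z.eqb_neq in HD. apply HD, Z.mod_divide; [lia |].
  exists C. lia.
Qed.

Section ReducedForms.
Hypothesis Hred : only_principal_reduced disc = true.

Lemma nrm_of_form_rep A B C p : 0 < A -> B * B - 4 * A * C = - disc ->
  (exists x y, A * x * x + B * x * y + C * y * y = p) -> exists g, nrm g = p.
Proof.
  revert B C. induction A as [A IH] using (well_founded_induction (Zwf_well_founded 0)).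
  intros B C HA Hdisc [x [y Hxy]]. pose proof disc_ge7.
  pose proof (Z.div_mod (B + A) (2 * A) ltac:(lia)) as Hdm.
  pose proof (Z.mod_pos_bound (B + A) (2 * A) ltac:(lia)) as Hmb.
  set (t := (B + A) / (2 * A)) in *.
  set (B' := B - 2 * A * t). set (C' := A * t * t - B * t + C).
  assert (HB' : -A <= B' < A) by (unfold B'; lia).
  assert (Hd' : B' * B' - 4 * A * C' = - disc) by (unfold B', C'; rewrite <- Hdisc; ring).
  assert (Hr' : A * (x + t * y) * (x + t * y) + B' * (x + t * y) * y + C' * y * y = p)
    by (rewrite <- Hxy; unfold B', C'; ring).
  destruct (Z_le_gt_dec A C') as [Hle | Hgt].
  - assert (3 * A * A <= disc) by nia.
    assert (A = 1) by (apply (only_principal_reducedP disc Hred A B' C'); lia). subst A.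
    assert (B' = - e1 /\ C' = k) as [EB EC]
      by (unfold disc in *; destruct He1 as [E | E]; rewrite E in *; nia).
    exists (x + t * y, - y). unfold nrm; cbn [fst snd]. rewrite <- Hr', EB, EC. ring.
  - assert (0 < C') by nia.
    apply (IH C' ltac:(unfold Zwf; lia) (- B') A); [lia | rewrite <- Hd'; ring |].
    exists y, (- (x + t * y)). rewrite <- Hr'. ring.
Qed.

(* With [T = tr g], [(T / snd g) ^ 2 = - disc] modulo [p]; shifting the root by [p] fixes its
   parity, making [- disc] a square modulo [4 p]. *)
Lemma form_of_prime_dvd_nrm p g : prime p -> p <> 2 -> (p | nrm g) ->
  ~ ((p | fst g) /\ (p | snd g)) -> exists B C, B * B - 4 * p * C = - disc.
Proof.
  intros Hp H2 [n Hn] Hnd. pose proof (prime_ge_2 _ Hp).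
  destruct g as [a b]. cbn [fst snd] in *.
  pose proof (nrm4 (a, b)) as H4. unfold tr in H4; cbn [fst snd] in H4.
  set (T := 2 * a + e1 * b) in *.
  assert (Hb : ~ (p | b)).
  { intros [c Hc]. apply Hnd. split; [|exists c; auto].
    assert (HT : (p | T * T)) by (exists (4 * n - disc * c * c * p); rewrite Hn, Hc in H4; nia).
    assert (H2a : (p | 2 * a)).
    { destruct (prime_mult p Hp T T HT) as [[t Ht] | [t Ht]];
        exists (t - e1 * c); unfold T in Ht; nia. }
    destruct (prime_mult p Hp 2 a H2a) as [Hd | Hd]; auto.
    apply Z.divide_pos_le in Hd; lia. }
  destruct (rel_prime_bezout _ _ (prime_rel_prime p Hp b Hb)) as [u v Huv].
  set (w := T * v).
  assert (Hw : w * w + disc = p * (4 * n * v * v + disc * u * (1 + b * v))).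
  { unfold w. assert (E1 : T * T = 4 * n * p - disc * b * b) by (rewrite Hn in H4; lia).
    assert (E2 : b * v = 1 - u * p) by lia.
    transitivity ((T * T) * (v * v) + disc); [ring|]. rewrite E1.
    transitivity (4 * n * p * v * v - disc * (b * v) * (b * v) + disc); [ring|]. rewrite E2. ring. }
  assert (Hpo : Z.even p = false).
  { destruct (Z.even p) eqn:E; auto. apply Z.even_spec in E as [z Hz].
    destruct (prime_divisors p Hp 2 ltac:(exists z; lia)) as [X|[X|[X|X]]]; lia. }
  assert (HB : exists B z, (p | B * B + disc) /\ B = e1 + 2 * z).
  { destruct (Z.even (w - e1)) eqn:E.
    - apply Z.even_spec in E as [z Hz]. exists w, z. split; [|lia].
      rewrite Hw. exists (4 * n * v * v + disc * u * (1 + b * v)). ring.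
    - assert (E' : Z.even (w + p - e1) = true).
      { replace (w + p - e1) with ((w - e1) + p) by ring. rewrite Z.even_add, E, Hpo. reflexivity. }
      apply Z.even_spec in E' as [z Hz]. exists (w + p), z. split; [|lia].
      exists (4 * n * v * v + disc * u * (1 + b * v) + 2 * w + p).
      replace ((w + p) * (w + p) + disc) with (w * w + disc + p * (2 * w + p)) by ring.
      rewrite Hw. ring. }
  destruct HB as [B [z [[X HX] HBz]]].
  assert (H4X : (4 | p * X)).
  { rewrite Z.mul_comm, <- HX. exists (e1 * z + z * z + k). unfold disc. rewrite HBz.
    destruct He1 as [E | E]; rewrite E; ring. }
  assert (Hrp : rel_prime 4 p).
  { apply rel_prime_sym, prime_rel_prime; auto. intros [c Hc].
    destruct (prime_mult p Hp 2 2) as [Y | Y]; [exists c; lia | |];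
      apply Z.divide_pos_le in Y; lia. }
  destruct (Gauss 4 p X H4X Hrp) as [C HC].
  exists B, C. rewrite HC in HX. lia.
Qed.

Lemma prime_dvd_nrm_is_nrm q g : prime q -> q <> 2 -> (q | nrm g) ->
  ~ ((q | fst g) /\ (q | snd g)) -> exists p, nrm p = q.
Proof.
  intros Hq H2 Hd Hn. destruct (form_of_prime_dvd_nrm q g Hq H2 Hd Hn) as [B [C HBC]].
  pose proof (prime_ge_2 _ Hq).
  apply (nrm_of_form_rep q B C q); [lia | exact HBC |]. exists 1, 0. ring.
Qed.

End ReducedForms.

(* [4 nrm p = tr p ^ 2 + disc * snd p ^ 2], so [nrm p | tr p] forces [tr p = 0] or
   [tr p = ± nrm p] with [nrm p <= 4]. *)
Lemma prime_nrm_ndvd_tr l p :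
  (forall q u, prime q -> q <> l -> disc * u * u = 4 * q -> False) ->
  prime (nrm p) -> nrm p <> l -> ~ (nrm p | tr p).
Proof.
  intros HD0 Hp Hpl [j Hj]. pose proof (prime_ge_2 _ Hp). pose proof (nrm4 p) as H4.
  set (q := nrm p) in *. rewrite Hj in H4. pose proof disc_ge7.
  pose proof (Z.square_nonneg (snd p)). pose proof (Z.square_nonneg j).
  destruct (Z.eq_dec j 0) as [-> | Hj0].
  - apply (HD0 q (snd p) Hp Hpl). lia.
  - assert (1 <= j * j) by nia. assert (q * (j * j) <= 4) by nia.
    assert (-1 <= j <= 1) by nia.
    assert (j * j = 1) by (assert (j = 1 \/ j = -1) as [-> | ->] by lia; lia).
    assert (disc * (snd p * snd p) = 4 * q - q * q) by nia.
    assert (snd p * snd p = 0) by nia.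
    assert (Hq4 : q = 4) by nia. rewrite Hq4 in Hp.
    destruct (prime_divisors 4 Hp 2 ltac:(exists 2; lia)) as [X|[X|[X|X]]]; lia.
Qed.
End QuadraticRing.

Section ImaginaryQuadraticFields.
Local Open Scope Z_scope.

(* For [e1 = 1] the ramified prime is [d = 4 k - 1 = disc], with [r = 2 w - 1 = sqrt (- d)]. *)
Lemma divb_sqrt_neg_disc k g : prime (4 * k - 1) -> (4 * k - 1 | nrm 1 k g) ->
  divb 1 k (-1, 2) g = true.
Proof.
  intros Hl Hd. set (l := 4 * k - 1) in *. pose proof (prime_ge_2 _ Hl).
  assert (Hnr : nrm 1 k (-1, 2) = l) by (unfold nrm, l; cbn [fst snd]; ring).
  rewrite divb_coord, Hnr by lia. destruct g as [a b].
  pose proof (nrm4 1 k (a, b)) as H4. unfold tr, disc in H4; cbn [fst snd] in H4.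
  destruct Hd as [n Hn]. rewrite Hn in H4.
  assert (HT : (l | (2 * a + b) * (2 * a + b))) by (exists (4 * n - b * b); unfold l in *; lia).
  assert (HT2 : (l | 2 * a + b)) by (destruct (prime_mult l Hl _ _ HT); auto).
  destruct HT2 as [t Ht]. unfold mul, cnj; cbn [fst snd]. split; [| exists (- t); lia].
  assert (H2 : (l | 2 * (a * 1 - k * b * (-2)))) by (exists (t + b); unfold l in *; lia).
  destruct (prime_mult l Hl _ _ H2) as [Hd | Hd]; auto.
  apply Z.divide_pos_le in Hd; lia.
Qed.

Lemma two_dvd_nrm_odd k g : Z.even k = false -> (2 | nrm 1 k g) -> (2 | fst g) /\ (2 | snd g).
Proof.
  intros Hodd [z Hz]. destruct g as [a b]; cbn [fst snd] in *.
  assert (E : Z.even (nrm 1 k (a, b)) = true) by (rewrite Hz, Z.even_mul; apply orb_true_r).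
  unfold nrm in E; cbn [fst snd] in E. rewrite !Z.even_add, !Z.even_mul, Hodd in E.
  destruct (Z.even a) eqn:Ea, (Z.even b) eqn:Eb; try discriminate E.
  split; apply even_dvd2; auto.
Qed.

Lemma shell_sum_trsq_neq0_theta k : 2 <= k -> prime (4 * k - 1) -> k = 2 \/ Z.even k = false ->
  only_principal_reduced (4 * k - 1) = true ->
  forall m, 1 <= m -> shell 1 k m <> nil -> shell_sum 1 k (trsq 1 k) m <> 0.
Proof.
  intros Hk Hl Hpar Hred. assert (He1 : 1 = 0 \/ 1 = 1) by lia.
  assert (Hdisc : disc 1 k = 4 * k - 1) by (unfold disc; ring).
  pose proof (prime_ge_2 _ Hl).
  apply (shell_sum_trsq_neq0 1 k He1 Hk (4 * k - 1) (-1, 2) Hl).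
  - unfold mul; cbn [fst snd]. f_equal; ring.
  - intros g. apply (divb_sqrt_neg_disc k g Hl).
  - intros p Hp Hpl. apply (prime_nrm_ndvd_tr 1 k He1 Hk (4 * k - 1)); auto.
    intros q u Hq Hql Hu. rewrite Hdisc in Hu. pose proof (prime_ge_2 _ Hq).
    assert (H4q : (4 * k - 1 | 4 * q)) by (exists (u * u); lia).
    destruct (prime_mult _ Hl _ _ H4q) as [H4 | H4].
    + apply Z.divide_pos_le in H4; lia.
    + destruct (prime_divisors q Hq _ H4) as [X|[X|[X|X]]]; lia.
  - intros q g Hq Hql Hd Hn. destruct (Z.eq_dec q 2) as [-> | Hq2].
    + destruct Hpar as [-> | Hodd]; [exists (0, 1); reflexivity |].
      exfalso. apply Hn, (two_dvd_nrm_odd k); auto.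
    + apply (prime_dvd_nrm_is_nrm 1 k He1 Hk) with g; rewrite ?Hdisc; auto.
Qed.

(* For [d = 2]: [w = r = sqrt (- 2)] and [disc = 8]. *)
Lemma shell_sum_trsq_neq0_sqrt2 m : 1 <= m -> shell 0 2 m <> nil -> shell_sum 0 2 (trsq 0 2) m <> 0.
Proof.
  assert (He1 : 0 = 0 \/ 0 = 1) by lia.
  apply (shell_sum_trsq_neq0 0 2 He1 ltac:(lia) 2 (0, 1) prime_2); [reflexivity | | |].
  - intros [a b] Hd. rewrite divb_coord by (unfold nrm; cbn [fst snd]; lia).
    replace (nrm 0 2 (0, 1)) with 2 by reflexivity.
    destruct Hd as [n Hn]. unfold nrm in Hn; cbn [fst snd] in Hn.
    assert (Ha : (2 | a * a)) by (exists (n - b * b); lia).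
    assert (Ha2 : (2 | a)) by (destruct (prime_mult 2 prime_2 _ _ Ha); auto).
    unfold mul, cnj; cbn [fst snd]. destruct Ha2 as [t Ht]. split; [exists b | exists (- t)]; lia.
  - intros p Hp Hpl. apply (prime_nrm_ndvd_tr 0 2 He1 ltac:(lia) 2); auto.
    intros q u Hq Hq2 Hu. unfold disc in Hu.
    destruct (prime_divisors q Hq 2 ltac:(exists (u * u); lia)) as [X|[X|[X|X]]];
      pose proof (prime_ge_2 _ Hq); lia.
  - intros q g Hq Hq2 Hd Hn.
    apply (prime_dvd_nrm_is_nrm 0 2 He1 ltac:(lia) ltac:(vm_compute; reflexivity)) with g; auto.
Qed.

End ImaginaryQuadraticFields.

Lemma sum_list_perm l l' : Permutation l l' -> sum_list l = sum_list l'.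
Proof. induction 1; simpl; lra. Qed.

Lemma sum_list_map_ext {A} (f g : A -> R) l :
  (forall x, f x = g x) -> sum_list (map f l) = sum_list (map g l).
Proof. intros H. induction l as [|x l IH]; simpl; auto. rewrite IH, H. reflexivity. Qed.

Lemma sum_list_map_scal {A} c (f : A -> R) l :
  sum_list (map (fun x => c * f x) l) = c * sum_list (map f l).
Proof. induction l as [|x l IH]; simpl; [ring |]. rewrite IH. ring. Qed.

Lemma sum_list_map_IZR {A} (f : A -> Z) l : sum_list (map (fun x => IZR (f x)) l) = IZR (zsum f l).
Proof. induction l as [|x l IH]; simpl; auto. rewrite IH, plus_IZR. reflexivity. Qed.

Definition coef_x2_minus_y2 (i j : nat) : R :=
  match i, j with 2%nat, 0%nat => 1 | 0%nat, 2%nat => -1 | _, _ => 0 end.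

Lemma poly2_eval_x2_minus_y2 x y : poly2_eval 2 coef_x2_minus_y2 x y = x ^ 2 - y ^ 2.
Proof. unfold poly2_eval, coef_x2_minus_y2; simpl. ring. Qed.

(* [cos^2 - sin^2] is the derivative of [sin * cos]. *)
Lemma sphere_avg_x2_minus_y2 :
  sphere_avg (fun p => poly2_eval 2 coef_x2_minus_y2 (fst p) (snd p)) = 0.
Proof.
  unfold sphere_avg. cbn [fst snd].
  rewrite (RInt_ext _ (fun th => cos th ^ 2 - sin th ^ 2))
    by (intros; apply poly2_eval_x2_minus_y2).
  assert (H : is_RInt (fun th => cos th ^ 2 - sin th ^ 2) 0 (2 * PI)
                (sin (2 * PI) * cos (2 * PI) - sin 0 * cos 0)).
  { apply (is_RInt_derive (fun th => sin th * cos th)).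
    - intros x _. auto_derive; auto. ring.
    - intros x _. apply continuity_pt_filterlim. apply derivable_continuous_pt. reg. }
  rewrite (is_RInt_unique _ _ _ _ H), sin_2PI, sin_0. unfold Rdiv. ring.
Qed.

Lemma design2_sum_x2_minus_y2 X :
  spherical_design 2 X -> sum_list (map (fun p => fst p ^ 2 - snd p ^ 2) X) = 0.
Proof.
  intros [Hne [_ [_ Hc]]]. specialize (Hc coef_x2_minus_y2).
  rewrite sphere_avg_x2_minus_y2 in Hc.
  rewrite (sum_list_map_ext _ (fun p => fst p ^ 2 - snd p ^ 2)) in Hc
    by (intros; apply poly2_eval_x2_minus_y2).
  assert (Hlen : 0 < INR (length X)) by (destruct X; [congruence | apply lt_0_INR; simpl; lia]).
  apply (Rmult_eq_reg_r (/ INR (length X))); [lra | apply Rinv_neq_0_compat; lra].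
Qed.

Definition shells_not_2designs (d : Z) : Prop :=
  forall m, 0 < m -> forall s : list (R * R), NoDup s ->
  (forall x, In x s <-> (in_lattice d x /\ fst x ^ 2 + snd x ^ 2 = m)) -> s <> nil ->
  ~ spherical_design_r 2 (sqrt m) s.

Section LatticeShells.
Variables (e1 k d : Z) (thx thy : R).
Hypothesis He1 : (e1 = 0 \/ e1 = 1)%Z.
Hypothesis Hk : (2 <= k)%Z.
Hypothesis Hth : theta d = (thx, thy).
Hypothesis Hthx : thx = IZR e1 / 2.
Hypothesis Hthy : thy * thy = IZR (disc e1 k) / 4.
Hypothesis Hthy0 : 0 < thy.
Hypothesis Hsum :
  forall m, (1 <= m)%Z -> shell e1 k m <> nil -> shell_sum e1 k (trsq e1 k) m <> 0%Z.

Lemma lat_pt_norm ab : fst (lat_pt d ab) ^ 2 + snd (lat_pt d ab) ^ 2 = IZR (nrm e1 k ab).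
Proof.
  destruct ab as [a b]. unfold lat_pt, nrm. rewrite Hth; cbn [fst snd].
  replace ((IZR b * thy) ^ 2) with (IZR b * IZR b * (thy * thy)) by ring. rewrite Hthy, Hthx.
  unfold disc. repeat rewrite ?minus_IZR, ?plus_IZR, ?mult_IZR. field.
Qed.

Lemma lat_pt_x2_minus_y2 ab :
  fst (lat_pt d ab) ^ 2 - snd (lat_pt d ab) ^ 2 = IZR (trsq e1 k ab) / 2.
Proof.
  destruct ab as [a b]. unfold lat_pt, trsq, tr, mul. rewrite Hth; cbn [fst snd].
  replace ((IZR b * thy) ^ 2) with (IZR b * IZR b * (thy * thy)) by ring. rewrite Hthy, Hthx.
  unfold disc. repeat rewrite ?minus_IZR, ?plus_IZR, ?mult_IZR. field.
Qed.

Lemma lat_pt_inj x y : lat_pt d x = lat_pt d y -> x = y.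
Proof.
  destruct x as [a b], y as [a' b']. unfold lat_pt. rewrite Hth; cbn [fst snd].
  intros H; inversion H as [[Ha Hb]].
  assert (IZR b = IZR b') as Eb%eq_IZR by (apply (Rmult_eq_reg_r thy); lra). subst b'.
  assert (IZR a = IZR a') as Ea%eq_IZR by lra. subst a'. reflexivity.
Qed.

Lemma lattice_shell_perm (M : Z) s : NoDup s ->
  (forall x, In x s <-> (in_lattice d x /\ fst x ^ 2 + snd x ^ 2 = IZR M)) ->
  Permutation s (map (lat_pt d) (shell e1 k M)).
Proof.
  intros Hnd Hs. apply NoDup_Permutation; auto.
  - apply FinFun.Injective_map_NoDup; [exact lat_pt_inj | apply shell_NoDup].
  - intros x. rewrite Hs, in_map_iff. split.
    + intros [[ab ->] Hn]. exists ab. rewrite in_shell by auto.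
      rewrite lat_pt_norm in Hn. apply eq_IZR in Hn. auto.
    + intros [ab [<- Hab]]. rewrite in_shell in Hab by auto.
      split; [exists ab; reflexivity |]. rewrite lat_pt_norm, Hab. reflexivity.
Qed.

Theorem lattice_shells_not_2designs : shells_not_2designs d.
Proof.
  intros m hm s Hnd Hs Hne [Hsq Hdes]. apply design2_sum_x2_minus_y2 in Hdes.
  assert (Hx0 : exists x0, In x0 s)
    by (destruct s as [|x0 ?]; [congruence | exists x0; left; auto]).
  destruct Hx0 as [x0 Hx0]. apply Hs in Hx0 as [[ab0 ->] Hn0]. rewrite lat_pt_norm in Hn0.
  set (M := nrm e1 k ab0) in *. subst m.
  assert (HM : (1 <= M)%Z) by (apply lt_IZR in hm; lia).
  pose proof (Permutation_map (fun p => (fst p / sqrt (IZR M), snd p / sqrt (IZR M)))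
                (lattice_shell_perm M s Hnd Hs)) as Hperm.
  apply (Hsum M HM).
  { intros E. rewrite E in Hperm.
    apply Hne, (map_eq_nil _ _ (Permutation_nil (Permutation_sym Hperm))). }
  apply eq_IZR. apply (Rmult_eq_reg_l (/ (2 * IZR M))); [| apply Rinv_neq_0_compat; lra].
  unfold shell_sum.
  rewrite Rmult_0_r, <- Hdes, (sum_list_perm _ _ (Permutation_map _ Hperm)), !map_map,
    <- sum_list_map_IZR, <- sum_list_map_scal.
  apply sum_list_map_ext. intros ab. cbn [fst snd].
  assert (Hsq2 : sqrt (IZR M) * sqrt (IZR M) = IZR M) by (apply sqrt_sqrt; lra).
  replace ((fst (lat_pt d ab) / sqrt (IZR M)) ^ 2 - (snd (lat_pt d ab) / sqrt (IZR M)) ^ 2)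
    with ((fst (lat_pt d ab) ^ 2 - snd (lat_pt d ab) ^ 2) / (sqrt (IZR M) * sqrt (IZR M)))
    by (field; lra).
  rewrite lat_pt_x2_minus_y2, Hsq2. field. lra.
Qed.

End LatticeShells.

Lemma shells_not_2designs_2 : shells_not_2designs 2.
Proof.
  apply (lattice_shells_not_2designs 0 2 2 0 (sqrt 2)); try lia.
  - reflexivity.
  - lra.
  - rewrite sqrt_sqrt by lra. unfold disc. simpl. lra.
  - apply sqrt_lt_R0. lra.
  - exact shell_sum_trsq_neq0_sqrt2.
Qed.

Lemma shells_not_2designs_theta k : (2 <= k)%Z -> prime_b (4 * k - 1) = true ->
  ((k =? 2) || negb (Z.even k))%Z = true -> only_principal_reduced (4 * k - 1) = true ->
  shells_not_2designs (4 * k - 1).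
Proof.
  intros Hk Hp Hpar Hred. set (d := (4 * k - 1)%Z) in *.
  assert (Hd : 0 < IZR d) by (apply IZR_lt; lia).
  apply (lattice_shells_not_2designs 1 k d (1 / 2) (sqrt (IZR d) / 2)); auto.
  - unfold theta. replace ((- d) mod 4)%Z with 1%Z; [reflexivity |].
    unfold d. replace (- (4 * k - 1))%Z with (1 + (- k) * 4)%Z by ring. now rewrite Z_mod_plus_full.
  - replace (sqrt (IZR d) / 2 * (sqrt (IZR d) / 2)) with (sqrt (IZR d) * sqrt (IZR d) / 4) by field.
    rewrite sqrt_sqrt by lra. unfold disc, d.
    now replace (4 * k - 1 * 1)%Z with (4 * k - 1)%Z by ring.
  - apply Rdiv_lt_0_compat; [apply sqrt_lt_R0 |]; lra.
  - apply shell_sum_trsq_neq0_theta; auto using prime_bP.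
    apply orb_true_iff in Hpar as [H | H]; [left; lia | right; now apply negb_true_iff].
Qed.

Theorem theorem1p3 (d : Z) (hd : In d (2 :: 7 :: 11 :: 19 :: 43 :: 67 :: 163 :: nil)%Z)
  (m : R) (hm : 0 < m) (s : list (R * R)) (hs_nodup : NoDup s)
  (hs : forall x, In x s <-> (in_lattice d x /\ fst x ^ 2 + snd x ^ 2 = m))
  (hne : s <> nil) :
  ~ spherical_design_r 2 (sqrt m) s.
Proof.
  revert m hm s hs_nodup hs hne. change (shells_not_2designs d).
  simpl in hd. destruct hd as [<-|[<-|[<-|[<-|[<-|[<-|[<-|[]]]]]]]];
    [exact shells_not_2designs_2 | apply (shells_not_2designs_theta 2)
    | apply (shells_not_2designs_theta 3) | apply (shells_not_2designs_theta 5)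
    | apply (shells_not_2designs_theta 11) | apply (shells_not_2designs_theta 17)
    | apply (shells_not_2designs_theta 41)];
    try lia; vm_compute; reflexivity.
Qed.
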